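(* Let $H$ be a complex infinite-dimensional separable Hilbert space and let $(f_n)_{n=1}^\infty$ and $(g_n)_{n=1}^\infty$ be frames for $H$ with analysis operators $U$ and $V$. If $I-VU^*$ is a compact operator on $\ell^2$, then both $(f_n)_{n=1}^\infty$ and $(g_n)_{n=1}^\infty$ are near-Riesz bases.
   Context: The analysis operator of a frame $(f_n)$ is $U:H\to\ell^2$, $Ux=(\langle x,f_n\rangle)_n$. The excess of a frame is the maximal number of elements that can be deleted so that the remaining sequence is still a frame; it equals $\dim\operatorname{Ker}U^*$. A near-Riesz basis is a frame with finite excess. *)

From Stdlib Require Import Reals ClassicalEpsilon.
Open Scope R_scope.

Record Cx := mkC { Re : R ; Im : R }.
Definition C0 : Cx := mkC 0 0.
Definition C1 : Cx := mkC 1 0.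
Definition Cadd (a b : Cx) : Cx := mkC (Re a + Re b) (Im a + Im b).
Definition Copp (a : Cx) : Cx := mkC (- Re a) (- Im a).
Definition Csub (a b : Cx) : Cx := Cadd a (Copp b).
Definition Cmul (a b : Cx) : Cx :=
  mkC (Re a * Re b - Im a * Im b) (Re a * Im b + Im a * Re b).
Definition Cconj (a : Cx) : Cx := mkC (Re a) (- Im a).
Definition Cnorm2 (a : Cx) : R := Re a * Re a + Im a * Im a.

Fixpoint Csum (m : nat) (a : nat -> Cx) : Cx :=
  match m with O => C0 | S k => Cadd (Csum k a) (a k) end.

Record CHilbert := {
  carrier :> Type;
  vzero : carrier;
  vadd : carrier -> carrier -> carrier;
  vopp : carrier -> carrier;
  vscal : Cx -> carrier -> carrier;
  inner : carrier -> carrier -> Cx;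
  vadd_assoc : forall x y z, vadd x (vadd y z) = vadd (vadd x y) z;
  vadd_comm : forall x y, vadd x y = vadd y x;
  vadd_0 : forall x, vadd x vzero = x;
  vadd_opp : forall x, vadd x (vopp x) = vzero;
  vscal_assoc : forall a b x, vscal a (vscal b x) = vscal (Cmul a b) x;
  vscal_1 : forall x, vscal C1 x = x;
  vscal_addv : forall a x y, vscal a (vadd x y) = vadd (vscal a x) (vscal a y);
  vscal_addc : forall a b x, vscal (Cadd a b) x = vadd (vscal a x) (vscal b x);
  inner_addl : forall x y z, inner (vadd x y) z = Cadd (inner x z) (inner y z);
  inner_scall : forall a x y, inner (vscal a x) y = Cmul a (inner x y);
  inner_conj : forall x y, inner y x = Cconj (inner x y);
  inner_pos : forall x, 0 <= Re (inner x x);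
  inner_def : forall x, inner x x = C0 -> x = vzero;
  complete : forall s : nat -> carrier,
    (forall eps, eps > 0 -> exists N, forall n m, (n >= N)%nat -> (m >= N)%nat ->
       sqrt (Re (inner (vadd (s n) (vopp (s m))) (vadd (s n) (vopp (s m))))) < eps) ->
    exists y, forall eps, eps > 0 -> exists N, forall n, (n >= N)%nat ->
       sqrt (Re (inner (vadd (s n) (vopp y)) (vadd (s n) (vopp y)))) < eps
}.

Arguments vzero {_}.
Arguments vadd {_}.
Arguments vopp {_}.
Arguments vscal {_}.
Arguments inner {_}.

Definition hnorm {H : CHilbert} (x : H) : R := sqrt (Re (inner x x)).
Definition vsub {H : CHilbert} (x y : H) : H := vadd x (vopp y).

Fixpoint vsum {H : CHilbert} (m : nat) (v : nat -> H) : H :=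
  match m with O => vzero | S k => vadd (vsum k v) (v k) end.

Definition hconv {H : CHilbert} (s : nat -> H) (y : H) : Prop :=
  forall eps, eps > 0 -> exists N, forall n, (n >= N)%nat -> hnorm (vsub (s n) y) < eps.

Definition separable (H : CHilbert) : Prop :=
  exists d : nat -> H, forall (x : H) eps, eps > 0 -> exists n, hnorm (vsub x (d n)) < eps.

Definition infinite_dimensional (H : CHilbert) : Prop :=
  ~ exists (m : nat) (b : nat -> H), forall x : H,
      exists a : nat -> Cx, x = vsum m (fun i => vscal (a i) (b i)).

Definition l2_sqsum (c : nat -> Cx) (s : R) : Prop :=
  infinite_sum (fun n => Cnorm2 (c n)) s.
Definition is_l2 (c : nat -> Cx) : Prop := exists s, l2_sqsum c s.

(* compact operator T on l^2: the image of the closed unit ball is relatively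
   compact, i.e. every sequence in the unit ball has a subsequence whose
   image converges in l^2 *)
Definition compact_l2_op (T : (nat -> Cx) -> (nat -> Cx)) : Prop :=
  forall c : nat -> nat -> Cx,
    (forall k, exists s, l2_sqsum (c k) s /\ s <= 1) ->
    exists (phi : nat -> nat) (d : nat -> Cx),
      (forall k, (phi k < phi (S k))%nat) /\ is_l2 d /\
      forall eps, eps > 0 -> exists N, forall k, (k >= N)%nat ->
        exists s, l2_sqsum (fun n => Csub (T (c (phi k)) n) (d n)) s /\ s < eps.

Definition analysis {H : CHilbert} (f : nat -> H) (x : H) : nat -> Cx :=
  fun n => inner x (f n).

Definition frame {H : CHilbert} (f : nat -> H) : Prop :=
  exists A B, 0 < A /\ 0 < B /\ forall x : H, exists s,
    l2_sqsum (analysis f x) s /\ A * hnorm x ^ 2 <= s /\ s <= B * hnorm x ^ 2.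

(* synthesis operator U^* c = sum_n c n f n (limit of partial sums, chosen
   classically; for a frame and c in l^2 the series converges) *)
Definition synthesis {H : CHilbert} (f : nat -> H) (c : nat -> Cx) : H :=
  epsilon (inhabits vzero)
    (fun y => hconv (fun N => vsum N (fun n => vscal (c n) (f n))) y).

Definition finite_dim_seqset (P : (nat -> Cx) -> Prop) : Prop :=
  exists (m : nat) (b : nat -> nat -> Cx), forall c, P c ->
    exists a : nat -> Cx, forall n, c n = Csum m (fun i => Cmul (a i) (b i n)).

(* excess = dim Ker U^* ; near-Riesz basis = frame with finite excess *)
Definition near_Riesz {H : CHilbert} (f : nat -> H) : Prop :=
  frame f /\ finite_dim_seqset (fun c => is_l2 c /\ synthesis f c = vzero).

(* Write T := I - V U^* on l^2.  The whole argument rests on the quadratic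
   form c |-> Re <T c, c>:
   - on Ker U^* we have T c = c, so Re <T c, c> = ||c||^2;
   - on Ker V^* we have <V U^* c, c> = <U^* c, V^* c> = 0, so again
     Re <T c, c> = ||c||^2.
   A compact operator cannot have Re <T c, c> = ||c||^2 on an
   infinite-dimensional subspace P of l^2: otherwise P contains unit vectors
   c_k vanishing on the first k coordinates, a subsequence of (T c_k)
   converges to some d in l^2, and splitting <T c, c> against d and the tail
   of d forces Re <T c, c> <= 3/4 for a far-out c_k.  Hence both kernels are
   finite-dimensional, i.e. both frames have finite excess. *)
From Pilot Require Import Defs.
From Stdlib Require Import Reals Lra Lia Psatz ClassicalEpsilon Classical.
Open Scope R_scope.

Arguments vadd_assoc {_}. Arguments vadd_comm {_}. Arguments vadd_0 {_}.
Arguments vadd_opp {_}. Arguments vscal_assoc {_}. Arguments vscal_1 {_}.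
Arguments vscal_addv {_}. Arguments vscal_addc {_}. Arguments inner_addl {_}.
Arguments inner_scall {_}. Arguments inner_conj {_}. Arguments inner_pos {_}.
Arguments inner_def {_}.

Lemma Ceq (a b : Cx) : Re a = Re b -> Im a = Im b -> a = b.
Proof. destruct a, b; simpl; intros; subst; reflexivity. Qed.

Ltac Cring := apply Ceq; simpl; ring.

Lemma Cnorm2_pos a : 0 <= Cnorm2 a.
Proof. unfold Cnorm2; nra. Qed.

Lemma Cnorm2_add a b : Cnorm2 (Cadd a b) <= 2 * Cnorm2 a + 2 * Cnorm2 b.
Proof.
  destruct a as [x y], b as [u v]; unfold Cnorm2; simpl.
  pose proof (pow2_ge_0 (x - u)); pose proof (pow2_ge_0 (y - v)). nra.
Qed.

Lemma Cnorm2_mul a b : Cnorm2 (Cmul a b) = Cnorm2 a * Cnorm2 b.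
Proof. destruct a, b; unfold Cnorm2; simpl; ring. Qed.

Lemma Cnorm2_nz z : z <> Defs.C0 -> Cnorm2 z <> 0.
Proof.
  intros Hz E. apply Hz. destruct z as [x y]. unfold Cnorm2 in E; simpl in E.
  assert (x = 0) by nra. assert (y = 0) by nra. subst. reflexivity.
Qed.

Definition Cinv (z : Cx) : Cx := mkC (Re z / Cnorm2 z) (- Im z / Cnorm2 z).

Lemma Csum_ext m a b : (forall i, (i < m)%nat -> a i = b i) -> Csum m a = Csum m b.
Proof.
  induction m; intros E; simpl; auto.
  rewrite IHm by (intros; apply E; lia). rewrite E by lia; auto.
Qed.

(* The elementary estimate behind the compactness argument:
   Re (t conj c) <= 2|t - d|^2 + 2|d|^2 + |c|^2 / 4. *)
Lemma Re_mul_conj_le (t d c : Cx) :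
  Re (Cmul t (Cconj c)) <= 2 * Cnorm2 (Csub t d) + 2 * Cnorm2 d + / 4 * Cnorm2 c.
Proof.
  destruct t as [tr ti], d as [dr di], c as [cr ci]. unfold Cnorm2; simpl.
  pose proof (pow2_ge_0 (tr - dr - cr/4)); pose proof (pow2_ge_0 (ti - di - ci/4)).
  pose proof (pow2_ge_0 (dr - cr/4)); pose proof (pow2_ge_0 (di - ci/4)).
  nra.
Qed.

Section HilbertAlgebra.
Context {H : CHilbert}.
Implicit Types x y z u v : H.

Lemma vadd_0l x : vadd vzero x = x.
Proof. rewrite vadd_comm; apply vadd_0. Qed.

Lemma vadd_cancel x y z : vadd x y = vadd x z -> y = z.
Proof.
  intros E.
  assert (E2 : vadd (vopp x) (vadd x y) = vadd (vopp x) (vadd x z)) by now rewrite E.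
  rewrite !vadd_assoc, (vadd_comm (vopp x) x), vadd_opp, !vadd_0l in E2. exact E2.
Qed.

Lemma vscal_0c x : vscal Defs.C0 x = vzero.
Proof.
  apply (vadd_cancel (vscal Defs.C0 x)). rewrite vadd_0, <- vscal_addc. f_equal. Cring.
Qed.

Lemma vscal_0v a : vscal a (@vzero H) = vzero.
Proof.
  apply (vadd_cancel (vscal a vzero)). rewrite vadd_0, <- vscal_addv, vadd_0. reflexivity.
Qed.

Lemma vopp_unique x y : vadd x y = vzero -> y = vopp x.
Proof. intros E. apply (vadd_cancel x). now rewrite E, vadd_opp. Qed.

Lemma vopp_scal x : vopp x = vscal (Copp Defs.C1) x.
Proof.
  symmetry; apply vopp_unique. rewrite <- (vscal_1 x) at 1. rewrite <- vscal_addc.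
  replace (Cadd Defs.C1 (Copp Defs.C1)) with Defs.C0 by Cring. apply vscal_0c.
Qed.

Lemma vsub_0 x : vsub x vzero = x.
Proof. unfold vsub. rewrite vopp_scal, vscal_0v. apply vadd_0. Qed.

Lemma vadd_swap x y u v : vadd (vadd x y) (vadd u v) = vadd (vadd x u) (vadd y v).
Proof.
  rewrite <- !vadd_assoc. f_equal. rewrite !vadd_assoc. f_equal. apply vadd_comm.
Qed.

Lemma vsub_add_l x y : vsub (vadd x y) x = y.
Proof.
  unfold vsub. rewrite (vadd_comm x y), <- vadd_assoc, vadd_opp, vadd_0. reflexivity.
Qed.

Lemma vsub_opp x y : vopp (vsub x y) = vsub y x.
Proof.
  unfold vsub. rewrite !vopp_scal, vscal_addv, <- !vopp_scal, vadd_comm. f_equal.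
  symmetry. apply vopp_unique. rewrite vadd_comm. apply vadd_opp.
Qed.

Lemma vsub_split x y s : vsub x y = vadd (vsub x s) (vsub s y).
Proof.
  unfold vsub. rewrite <- vadd_assoc. f_equal. rewrite vadd_assoc.
  rewrite (vadd_comm (vopp s) s), vadd_opp, vadd_0l. reflexivity.
Qed.

Lemma vsub_lin a b x y u v :
  vsub (vadd (vscal a x) (vscal b y)) (vadd (vscal a u) (vscal b v))
  = vadd (vscal a (vsub x u)) (vscal b (vsub y v)).
Proof.
  unfold vsub. rewrite !vopp_scal, vscal_addv, vadd_swap, !vscal_addv, !vscal_assoc.
  do 2 f_equal; f_equal; Cring.
Qed.

Lemma inner_addr x y z : inner x (vadd y z) = Cadd (inner x y) (inner x z).
Proof.
  rewrite inner_conj, inner_addl, (inner_conj x y), (inner_conj x z).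
  destruct (inner y x), (inner z x); Cring.
Qed.

Lemma inner_scalr a x y : inner x (vscal a y) = Cmul (Cconj a) (inner x y).
Proof.
  rewrite inner_conj, inner_scall, (inner_conj x y). destruct (inner y x), a; Cring.
Qed.

Lemma inner_0l y : inner vzero y = Defs.C0.
Proof. rewrite <- (vscal_0c y) at 1. rewrite inner_scall. destruct (inner y y); Cring. Qed.

Lemma inner_0r y : inner y vzero = Defs.C0.
Proof. rewrite inner_conj, inner_0l. Cring. Qed.

Lemma Re_inner_sym x y : Re (inner x y) = Re (inner y x).
Proof. rewrite (inner_conj x y). reflexivity. Qed.

Definition nsq x := Re (inner x x).

Lemma nsq_pos x : 0 <= nsq x.
Proof. apply inner_pos. Qed.

Lemma Im_inner_self x : Im (inner x x) = 0.
Proof. pose proof (inner_conj x x) as E. apply (f_equal Im) in E. simpl in E. lra. Qed.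

Lemma nsq_expand x a y :
  nsq (vadd x (vscal a y)) =
  nsq x + 2 * (Re a * Re (inner y x) - Im a * Im (inner y x))
        + (Re a * Re a + Im a * Im a) * nsq y.
Proof.
  unfold nsq. rewrite inner_addl, !inner_addr, !inner_scall, !inner_scalr.
  rewrite (inner_conj y x). destruct a as [ar ai]. simpl.
  pose proof (Im_inner_self y). unfold Cconj. simpl. nra.
Qed.

Lemma nsq_scal a x : nsq (vscal a x) = Cnorm2 a * nsq x.
Proof.
  unfold nsq. rewrite inner_scall, inner_scalr. pose proof (Im_inner_self x).
  destruct a; unfold Cnorm2; simpl. nra.
Qed.

Lemma nsq_sub_sym x y : nsq (vsub x y) = nsq (vsub y x).
Proof.
  rewrite <- vsub_opp, vopp_scal, nsq_scal. unfold Cnorm2; simpl. ring.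
Qed.

Lemma inner_ineq x y t : 2 * t * Re (inner y x) <= nsq x + t * t * nsq y.
Proof.
  pose proof (nsq_pos (vadd x (vscal (mkC (- t) 0) y))) as P.
  rewrite nsq_expand in P. simpl in P. nra.
Qed.

Lemma nsq_add x y : nsq (vadd x y) <= 2 * nsq x + 2 * nsq y.
Proof.
  rewrite <- (vscal_1 y), nsq_expand, nsq_scal.
  pose proof (inner_ineq x y 1). pose proof (nsq_pos x). pose proof (nsq_pos y).
  unfold Cnorm2, Defs.C1; simpl. nra.
Qed.

Lemma nsq_zero x : nsq x = 0 -> x = vzero.
Proof. intros E. apply inner_def. apply Ceq; [exact E | apply Im_inner_self]. Qed.

Lemma hnorm_sq x : hnorm x ^ 2 = nsq x.
Proof. unfold hnorm. simpl. rewrite Rmult_1_r. apply sqrt_sqrt. apply nsq_pos. Qed.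

End HilbertAlgebra.

(* a 0 + ... + a (m-1); unlike sum_f_R0 it counts m terms, matching Csum and vsum. *)
Fixpoint rsum (m : nat) (a : nat -> R) : R :=
  match m with O => 0 | S k => rsum k a + a k end.

Lemma sum_f_R0_rsum f n : sum_f_R0 f n = rsum (S n) f.
Proof. induction n; simpl in *; [ring | rewrite IHn; reflexivity]. Qed.

Lemma rsum_ext m a b : (forall n, (n < m)%nat -> a n = b n) -> rsum m a = rsum m b.
Proof.
  induction m; intros E; simpl; auto.
  rewrite IHm by (intros; apply E; lia). rewrite E by lia; auto.
Qed.

Lemma rsum_nonneg m a : (forall n, 0 <= a n) -> 0 <= rsum m a.
Proof. intros P; induction m; simpl; [lra | specialize (P m); lra]. Qed.

Lemma rsum_mono m k a : (forall n, 0 <= a n) -> (m <= k)%nat -> rsum m a <= rsum k a.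
Proof. intros P Hmk. induction Hmk; [lra|]. simpl. specialize (P m0). lra. Qed.

Lemma rsum_le m a b : (forall n, a n <= b n) -> rsum m a <= rsum m b.
Proof. intros P; induction m; simpl; [lra | specialize (P m); lra]. Qed.

Lemma rsum_lin m al be a b :
  rsum m (fun n => al * a n + be * b n) = al * rsum m a + be * rsum m b.
Proof. induction m; simpl; [ring | rewrite IHm; ring]. Qed.

Lemma rsum_scal m k a : rsum m (fun n => k * a n) = k * rsum m a.
Proof. induction m; simpl; [ring | rewrite IHm; ring]. Qed.

Lemma rsum_plus m a b : rsum m (fun n => a n + b n) = rsum m a + rsum m b.
Proof. induction m; simpl; [ring | rewrite IHm; ring]. Qed.

Lemma Re_Csum m a : Re (Csum m a) = rsum m (fun n => Re (a n)).
Proof. induction m; simpl; [reflexivity | rewrite IHm; reflexivity]. Qed.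

Lemma rsum_cut (a : nat -> R) M K : (M <= K)%nat ->
  rsum K (fun n => if Nat.ltb n M then 0 else a n) = rsum K a - rsum M a.
Proof.
  intros HMK. replace K with (M + (K - M))%nat by lia. clear HMK.
  induction (K - M)%nat as [|j IH].
  - rewrite Nat.add_0_r, (rsum_ext M _ (fun _ => 0)).
    + clear. induction M; simpl; lra.
    + intros n Hn. apply Nat.ltb_lt in Hn. now rewrite Hn.
  - rewrite Nat.add_succ_r. simpl. rewrite IH.
    replace (Nat.ltb (M + j) M) with false by (symmetry; apply Nat.ltb_ge; lia). ring.
Qed.

Lemma inf_sum_ext a b s : (forall n, a n = b n) -> infinite_sum a s -> infinite_sum b s.
Proof.
  intros E I eps He. destruct (I eps He) as [N HN]. exists N. intros n Hn.
  specialize (HN n Hn). rewrite !sum_f_R0_rsum in *.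
  rewrite <- (rsum_ext _ a b) by (intros; auto). auto.
Qed.

Lemma partial_le a s N : infinite_sum a s -> (forall n, 0 <= a n) -> rsum N a <= s.
Proof.
  intros I P. destruct (Rle_or_lt (rsum N a) s) as [h|h]; auto.
  destruct (I (rsum N a - s)) as [M HM]; [lra|].
  specialize (HM (max M N) (Nat.le_max_l _ _)). rewrite sum_f_R0_rsum in HM.
  pose proof (rsum_mono N (S (max M N)) a P ltac:(lia)).
  unfold Rdist in HM. apply Rabs_def2 in HM. lra.
Qed.

Lemma tail_small a s : infinite_sum a s -> forall eps, eps > 0 ->
  exists J, forall j, (j >= J)%nat -> Rabs (s - rsum j a) < eps.
Proof.
  intros I eps He. destruct (I eps He) as [N HN]. exists (S N). intros j Hj.
  destruct j; [lia|]. specialize (HN j ltac:(lia)). rewrite sum_f_R0_rsum in HN.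
  unfold Rdist in HN. rewrite Rabs_minus_sym. exact HN.
Qed.

Lemma inf_sum_cauchy a s : infinite_sum a s -> forall eps, eps > 0 ->
  exists J, forall M K, (J <= M)%nat -> (M <= K)%nat -> rsum K a - rsum M a < eps.
Proof.
  intros I eps He. destruct (tail_small a s I (eps/2)) as [J HJ]; [lra|].
  exists J. intros M K h1 h2. pose proof (HJ M h1) as A. pose proof (HJ K ltac:(lia)) as B.
  apply Rabs_def2 in A. apply Rabs_def2 in B. lra.
Qed.

Lemma inf_sum_lin u v lu lv al be :
  infinite_sum u lu -> infinite_sum v lv ->
  infinite_sum (fun n => al * u n + be * v n) (al * lu + be * lv).
Proof.
  intros Iu Iv eps He.
  set (K := Rabs al + Rabs be + 1).
  assert (HK : 0 < K) by (unfold K; pose proof (Rabs_pos al); pose proof (Rabs_pos be); lra).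
  destruct (Iu (eps / K)) as [N1 H1]; [apply Rdiv_lt_0_compat; lra|].
  destruct (Iv (eps / K)) as [N2 H2]; [apply Rdiv_lt_0_compat; lra|].
  exists (max N1 N2). intros n Hn.
  specialize (H1 n ltac:(lia)). specialize (H2 n ltac:(lia)).
  rewrite sum_f_R0_rsum in *. rewrite rsum_lin. unfold Rdist in *.
  replace (al * rsum (S n) u + be * rsum (S n) v - (al * lu + be * lv))
    with (al * (rsum (S n) u - lu) + be * (rsum (S n) v - lv)) by ring.
  eapply Rle_lt_trans; [apply Rabs_triang|]. rewrite !Rabs_mult.
  assert (eps / K * K = eps) by (field; lra).
  pose proof (Rabs_pos al); pose proof (Rabs_pos be).
  pose proof (Rabs_pos (rsum (S n) u - lu)); pose proof (Rabs_pos (rsum (S n) v - lv)).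
  unfold K in *. nra.
Qed.

Lemma inf_sum_le u v lu lv : infinite_sum u lu -> infinite_sum v lv ->
  (forall n, u n <= v n) -> lu <= lv.
Proof.
  intros Iu Iv P. eapply Rle_cv_lim; [|exact Iu|exact Iv].
  intros n. rewrite !sum_f_R0_rsum. apply rsum_le; auto.
Qed.

Lemma inf_sum_tail a s j : infinite_sum a s ->
  infinite_sum (fun n => if Nat.ltb n j then 0 else a n) (s - rsum j a).
Proof.
  intros I eps Heps. destruct (I eps Heps) as [N HN]. exists (max N j). intros n Hn.
  specialize (HN n ltac:(lia)). rewrite sum_f_R0_rsum in *.
  rewrite rsum_cut by lia. unfold Rdist in *.
  replace (rsum (S n) a - rsum j a - (s - rsum j a)) with (rsum (S n) a - s) by ring.
  exact HN.
Qed.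

Lemma is_l2_lin a b c p : is_l2 c -> is_l2 p ->
  is_l2 (fun n => Cadd (Cmul a (c n)) (Cmul b (p n))).
Proof.
  intros [sc Hc] [sp Hp].
  destruct (Rseries_CV_comp (fun n => Cnorm2 (Cadd (Cmul a (c n)) (Cmul b (p n))))
     (fun n => (2 * Cnorm2 a) * Cnorm2 (c n) + (2 * Cnorm2 b) * Cnorm2 (p n)))
    as [l Hl].
  - intros n. split; [apply Cnorm2_pos|].
    eapply Rle_trans; [apply Cnorm2_add|]. rewrite !Cnorm2_mul. lra.
  - exists ((2 * Cnorm2 a) * sc + (2 * Cnorm2 b) * sp). apply inf_sum_lin; auto.
  - exists l; exact Hl.
Qed.

Section Convergence.
Context {H : CHilbert}.

Lemma hconv_nsq (s : nat -> H) y : hconv s y <->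
  forall eps, eps > 0 -> exists N, forall n, (n >= N)%nat -> nsq (vsub (s n) y) < eps.
Proof.
  split.
  - intros Hc eps He. destruct (Hc (sqrt eps) (sqrt_lt_R0 _ He)) as [N HN].
    exists N. intros n Hn. specialize (HN n Hn). rewrite <- hnorm_sq.
    pose proof (sqrt_pos (Re (inner (vsub (s n) y) (vsub (s n) y)))).
    unfold hnorm in *. simpl. rewrite Rmult_1_r.
    rewrite <- (sqrt_sqrt eps) by lra. apply Rmult_le_0_lt_compat; auto.
  - intros Hc eps He. destruct (Hc (eps * eps)) as [N HN]; [nra|].
    exists N. intros n Hn. specialize (HN n Hn). unfold hnorm.
    rewrite <- (sqrt_square eps) by lra. apply sqrt_lt_1_alt. split; [apply nsq_pos|exact HN].
Qed.

Lemma hconv_ext (s t : nat -> H) y : (forall n, s n = t n) -> hconv s y -> hconv t y.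
Proof.
  intros E Hc eps He. destruct (Hc eps He) as [N HN]. exists N. intros n Hn. rewrite <- E. auto.
Qed.

Lemma hconv_unique (s : nat -> H) y1 y2 : hconv s y1 -> hconv s y2 -> y1 = y2.
Proof.
  intros H1 H2. rewrite hconv_nsq in H1, H2.
  assert (E : nsq (vsub y1 y2) = 0).
  { apply Rle_antisym; [|apply nsq_pos]. apply Rnot_lt_le. intros Hp.
    destruct (H1 (nsq (vsub y1 y2) / 4)) as [N1 HN1]; [lra|].
    destruct (H2 (nsq (vsub y1 y2) / 4)) as [N2 HN2]; [lra|].
    set (n := max N1 N2).
    specialize (HN1 n ltac:(lia)). specialize (HN2 n ltac:(lia)).
    pose proof (nsq_add (vsub y1 (s n)) (vsub (s n) y2)) as Ha.
    rewrite <- vsub_split, (nsq_sub_sym y1 (s n)) in Ha. lra. }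
  apply nsq_zero in E. unfold vsub in E.
  assert (HE : vadd (vadd y1 (vopp y2)) y2 = y2) by (rewrite E; apply vadd_0l).
  rewrite <- vadd_assoc, (vadd_comm (vopp y2)), vadd_opp, vadd_0 in HE. exact HE.
Qed.

Lemma hconv_lin (s t : nat -> H) y z a b : hconv s y -> hconv t z ->
  hconv (fun n => vadd (vscal a (s n)) (vscal b (t n))) (vadd (vscal a y) (vscal b z)).
Proof.
  rewrite !hconv_nsq. intros H1 H2 eps He.
  set (K := 2 * Cnorm2 a + 2 * Cnorm2 b + 1).
  pose proof (Cnorm2_pos a). pose proof (Cnorm2_pos b).
  assert (HK : 0 < K) by (unfold K; lra).
  destruct (H1 (eps / K)) as [N1 HN1]; [apply Rdiv_lt_0_compat; lra|].
  destruct (H2 (eps / K)) as [N2 HN2]; [apply Rdiv_lt_0_compat; lra|].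
  exists (max N1 N2). intros n Hn. specialize (HN1 n ltac:(lia)). specialize (HN2 n ltac:(lia)).
  rewrite vsub_lin. eapply Rle_lt_trans; [apply nsq_add|]. rewrite !nsq_scal.
  assert (eps / K * K = eps) by (field; lra).
  pose proof (nsq_pos (vsub (s n) y)). pose proof (nsq_pos (vsub (t n) z)).
  unfold K in *. nra.
Qed.

Lemma inner_cv_0 (y : H) (s : nat -> H) :
  hconv s vzero -> Un_cv (fun N => Re (inner y (s N))) 0.
Proof.
  rewrite hconv_nsq. intros Hc eps He.
  pose proof (nsq_pos y) as HY. set (Y := nsq y) in *.
  set (t := (Y + 1) / eps).
  assert (Ht : 0 < t) by (unfold t; apply Rdiv_lt_0_compat; lra).
  assert (Hte : t * eps = Y + 1) by (unfold t; field; lra).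
  destruct (Hc (/ (t * t))) as [N HN]. { apply Rinv_0_lt_compat; nra. }
  exists N. intros n Hn. specialize (HN n Hn). rewrite vsub_0 in HN.
  unfold Rdist. rewrite Rminus_0_r.
  pose proof (inner_ineq y (s n) t) as I1. pose proof (inner_ineq y (s n) (- t)) as I2.
  rewrite <- Re_inner_sym in I1, I2. fold Y in I1, I2.
  assert (E : t * t * nsq (s n) < 1).
  { apply (Rmult_lt_compat_l (t*t)) in HN; [|nra]. rewrite Rinv_r in HN; nra. }
  apply Rabs_def1; nra.
Qed.

End Convergence.

(** * The synthesis operator of a frame *)

Section Synthesis.
Context {H : CHilbert}.

Definition psum (c : nat -> Cx) (g : nat -> H) (N : nat) : H :=
  vsum N (fun n => vscal (c n) (g n)).

Lemma vsum_ext N (u v : nat -> H) :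
  (forall n, (n < N)%nat -> u n = v n) -> vsum N u = vsum N v.
Proof.
  induction N; intros E; simpl; auto.
  rewrite IHN by (intros; apply E; lia). rewrite E by lia; auto.
Qed.

Lemma inner_psum_r y c g N :
  inner y (psum c g N) = Csum N (fun n => Cmul (Cconj (c n)) (inner y (g n))).
Proof.
  induction N; unfold psum in *; simpl; [apply inner_0r|].
  rewrite inner_addr, IHN, inner_scalr. reflexivity.
Qed.

Lemma psum_lin a b c p g N :
  psum (fun n => Cadd (Cmul a (c n)) (Cmul b (p n))) g N
  = vadd (vscal a (psum c g N)) (vscal b (psum p g N)).
Proof.
  induction N; unfold psum in *; simpl.
  { rewrite !vscal_0v, vadd_0. reflexivity. }
  rewrite IHN, vscal_addc, <- !vscal_assoc, !vscal_addv. apply vadd_swap.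
Qed.

Definition cut (M : nat) (c : nat -> Cx) (n : nat) : Cx :=
  if Nat.ltb n M then Defs.C0 else c n.

Lemma psum_cut c g M K : (M <= K)%nat ->
  psum c g K = vadd (psum c g M) (psum (cut M c) g K).
Proof.
  intros HMK.
  assert (E : psum c g K =
      psum (fun n => Cadd (Cmul Defs.C1 (if Nat.ltb n M then c n else Defs.C0))
                          (Cmul Defs.C1 (cut M c n))) g K).
  { unfold psum. apply vsum_ext. intros n _. f_equal. unfold cut.
    destruct (Nat.ltb n M); destruct (c n); Cring. }
  rewrite E, psum_lin, !vscal_1. f_equal.
  replace K with (M + (K - M))%nat by lia. clear E HMK.
  induction (K - M)%nat as [|j IH].
  - rewrite Nat.add_0_r. unfold psum. apply vsum_ext. intros n Hn.
    apply Nat.ltb_lt in Hn. now rewrite Hn.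
  - rewrite Nat.add_succ_r. unfold psum in *. simpl. rewrite IH.
    replace (Nat.ltb (M + j) M) with false by (symmetry; apply Nat.ltb_ge; lia).
    rewrite vscal_0c, vadd_0. reflexivity.
Qed.

(* Bessel-type bound for a sequence with upper frame bound B:
   || sum_(n < N) d n g n ||^2 <= B sum_(n < N) |d n|^2.
   With z the partial sum, ||z||^2 = sum conj(d n) <z, g n>, and the
   pointwise AM-GM estimate with weight 1/B together with
   sum |<z, g n>|^2 <= B ||z||^2 gives the claim. *)
Lemma bessel (g : nat -> H) B d N : 0 < B ->
  (forall x : H, exists s, l2_sqsum (analysis g x) s /\ s <= B * hnorm x ^ 2) ->
  nsq (psum d g N) <= B * rsum N (fun n => Cnorm2 (d n)).
Proof.
  intros HB Hfr. set (z := psum d g N).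
  destruct (Hfr z) as [s [Hs Hsb]]. rewrite hnorm_sq in Hsb.
  assert (Hp : rsum N (fun n => Cnorm2 (inner z (g n))) <= s).
  { apply (partial_le _ _ _ Hs). intros n; apply Cnorm2_pos. }
  assert (E : nsq z = rsum N (fun n => Re (Cmul (Cconj (d n)) (inner z (g n))))).
  { unfold nsq. unfold z at 2. rewrite inner_psum_r, Re_Csum. reflexivity. }
  set (t := / B).
  assert (Ht : 0 < t) by (unfold t; apply Rinv_0_lt_compat; lra).
  assert (HtB : t * B = 1) by (unfold t; field; lra).
  assert (Hpt : forall n, 2 * t * Re (Cmul (Cconj (d n)) (inner z (g n)))
      <= t * t * Cnorm2 (inner z (g n)) + Cnorm2 (d n)).
  { intros n. destruct (d n) as [dr di], (inner z (g n)) as [ar ai]. unfold Cnorm2; simpl.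
    pose proof (pow2_ge_0 (t*ar - dr)); pose proof (pow2_ge_0 (t*ai - di)). nra. }
  assert (Hsum : 2 * t * nsq z <= t * t * rsum N (fun n => Cnorm2 (inner z (g n)))
                                   + rsum N (fun n => Cnorm2 (d n))).
  { rewrite E, <- !rsum_scal, <- rsum_plus. apply rsum_le. exact Hpt. }
  pose proof (nsq_pos z).
  assert (H3 : t * nsq z <= rsum N (fun n => Cnorm2 (d n))).
  { assert (t * t * rsum N (fun n => Cnorm2 (inner z (g n))) <= t * (t * B * nsq z)) by nra.
    rewrite HtB in *. lra. }
  apply (Rmult_le_compat_l B) in H3; [|lra].
  replace (B * (t * nsq z)) with (nsq z * (t * B)) in H3 by ring. rewrite HtB in H3. lra.
Qed.

(* For a frame and c in l^2 the series sum c n g n converges: its partial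
   sums are Cauchy by the Bessel bound, and H is complete. *)
Lemma synth_conv (g : nat -> H) c : frame g -> is_l2 c -> exists y, hconv (psum c g) y.
Proof.
  intros [A [B [HA [HB Hfr]]]] [sc Hsc].
  assert (Hfr' : forall x : H, exists s, l2_sqsum (analysis g x) s /\ s <= B * hnorm x ^ 2).
  { intros x. destruct (Hfr x) as [s [h1 [h2 h3]]]. eauto. }
  apply (complete H (psum c g)). intros eps He.
  destruct (inf_sum_cauchy _ _ Hsc (eps * eps / B)) as [J HJ].
  { apply Rdiv_lt_0_compat; nra. }
  assert (Hb : forall M K, (J <= M)%nat -> (M <= K)%nat ->
                 nsq (vsub (psum c g K) (psum c g M)) < eps * eps).
  { intros M K h1 h2. rewrite (psum_cut c g M K h2) at 1. rewrite vsub_add_l.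
    eapply Rle_lt_trans; [apply (bessel g B); auto|].
    rewrite (rsum_ext K _ (fun n => if Nat.ltb n M then 0 else Cnorm2 (c n))).
    2:{ intros n _. unfold cut. destruct (Nat.ltb n M); auto. unfold Cnorm2; simpl; ring. }
    rewrite rsum_cut by auto. specialize (HJ M K h1 h2).
    assert (eps * eps / B * B = eps * eps) by (field; lra). nra. }
  exists J. intros n m Hn Hm.
  change (hnorm (vsub (psum c g n) (psum c g m)) < eps). unfold hnorm.
  rewrite <- (sqrt_square eps) by lra. apply sqrt_lt_1_alt. split; [apply nsq_pos|].
  fold (nsq (vsub (psum c g n) (psum c g m))).
  destruct (Nat.le_ge_cases n m).
  - rewrite nsq_sub_sym. apply Hb; lia.
  - apply Hb; lia.
Qed.

Lemma synth_spec (g : nat -> H) c : frame g -> is_l2 c -> hconv (psum c g) (synthesis g c).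
Proof. intros Hf Hc. unfold synthesis. apply epsilon_spec. apply (synth_conv g c Hf Hc). Qed.

Definition ker_synthesis (g : nat -> H) (c : nat -> Cx) : Prop :=
  is_l2 c /\ synthesis g c = vzero.

Lemma ker_synthesis_lin (g : nat -> H) a b c p : frame g ->
  ker_synthesis g c -> ker_synthesis g p ->
  ker_synthesis g (fun n => Cadd (Cmul a (c n)) (Cmul b (p n))).
Proof.
  intros Hf [Hc Ec] [Hp Ep].
  pose proof (is_l2_lin a b c p Hc Hp) as Hl2. split; auto.
  assert (S2 : hconv (fun n => vadd (vscal a (psum c g n)) (vscal b (psum p g n)))
                     (vadd (vscal a vzero) (vscal b vzero))).
  { apply hconv_lin; [rewrite <- Ec | rewrite <- Ep]; apply synth_spec; auto. }
  rewrite !vscal_0v, vadd_0 in S2.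
  apply (hconv_unique (psum (fun n => Cadd (Cmul a (c n)) (Cmul b (p n))) g));
    [apply synth_spec; auto|].
  eapply hconv_ext; [|exact S2]. intros n. symmetry. apply psum_lin.
Qed.

(* For c in Ker V^*:  sum_n Re(<y, g n> conj(c n)) = Re <y, V^* c> = 0. *)
Lemma pairing_ker_synthesis (g : nat -> H) c (y : H) : frame g ->
  ker_synthesis g c -> infinite_sum (fun n => Re (Cmul (inner y (g n)) (Cconj (c n)))) 0.
Proof.
  intros Hg [Hl2 E].
  pose proof (synth_spec g c Hg Hl2) as Sp. rewrite E in Sp.
  intros eps He. destruct (inner_cv_0 y _ Sp eps He) as [N HN]. exists N. intros n Hn.
  specialize (HN (S n) ltac:(lia)). rewrite sum_f_R0_rsum.
  rewrite inner_psum_r, Re_Csum in HN.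
  rewrite (rsum_ext _ _ (fun i => Re (Cmul (Cconj (c i)) (inner y (g i))))); [exact HN|].
  intros i _. destruct (c i), (inner y (g i)); simpl; ring.
Qed.

End Synthesis.

(** * Finite-dimensional sets of sequences *)

Definition lin_closed (P : (nat -> Cx) -> Prop) : Prop :=
  forall a b c p, P c -> P p -> P (fun n => Cadd (Cmul a (c n)) (Cmul b (p n))).

(* If every element of a linear set P vanishing on the first N coordinates is
   zero, then P has dimension at most N (Gaussian elimination on coordinate N). *)
Lemma fd_of_head_injective N : forall (P : (nat -> Cx) -> Prop), lin_closed P ->
  (forall c, P c -> (forall n, (n < N)%nat -> c n = Defs.C0) -> forall n, c n = Defs.C0) ->
  finite_dim_seqset P.
Proof.
  induction N as [|N IH]; intros P Hlin Hv.
  - exists 0%nat, (fun _ _ => Defs.C0). intros c Pc. exists (fun _ => Defs.C0).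
    intros n. simpl. apply (Hv c Pc). intros; lia.
  - destruct (classic (exists p, P p /\ p N <> Defs.C0)) as [[p [Pp HpN]]|Hno].
    + (* eliminate coordinate N using the pivot p *)
      set (P' := fun c => P c /\ c N = Defs.C0).
      assert (Hlin' : lin_closed P').
      { intros a b c q [Pc Ec] [Pq Eq]. split; [apply Hlin; auto|].
        simpl. rewrite Ec, Eq. Cring. }
      destruct (IH P' Hlin') as [m [bs Hbs]].
      { intros c [Pc Ec] Hc. apply (Hv c Pc). intros n Hn.
        destruct (Nat.eq_dec n N); [subst; auto | apply Hc; lia]. }
      exists (S m), (fun i n => if Nat.eqb i m then p n else bs i n).
      intros c Pc. set (al := Cmul (c N) (Cinv (p N))).
      set (c' := fun n => Cadd (Cmul Defs.C1 (c n)) (Cmul (Copp al) (p n))).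
      assert (Pc' : P' c').
      { split; [apply Hlin; auto|]. unfold c', al.
        pose proof (Cnorm2_nz _ HpN) as Hnz. destruct (c N) as [x y], (p N) as [u v].
        unfold Cinv, Cnorm2 in *; simpl in *. apply Ceq; simpl; field; auto. }
      destruct (Hbs c' Pc') as [a' Ha'].
      exists (fun i => if Nat.eqb i m then al else a' i). intros n. simpl.
      rewrite Nat.eqb_refl.
      rewrite (Csum_ext m _ (fun i => Cmul (a' i) (bs i n))).
      2:{ intros i Hi. destruct (Nat.eqb_spec i m); [lia|reflexivity]. }
      rewrite <- Ha'. unfold c'. destruct (c n), (p n), al; Cring.
    +
      apply IH; auto. intros c Pc Hc. apply (Hv c Pc). intros n Hn.
      destruct (Nat.eq_dec n N); [|apply Hc; lia]. subst.
      apply NNPP. intros Hne. apply Hno. exists c. auto.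
Qed.

Lemma unit_tail_vectors (P : (nat -> Cx) -> Prop) :
  lin_closed P -> (forall c, P c -> is_l2 c) -> ~ finite_dim_seqset P ->
  forall N, exists c, P c /\ l2_sqsum c 1 /\ (forall n, (n < N)%nat -> c n = Defs.C0).
Proof.
  intros Hlin Hl2 Hnf N.
  assert (Hex : exists c, P c /\ (forall n, (n < N)%nat -> c n = Defs.C0) /\ exists n, c n <> Defs.C0).
  { apply NNPP. intros Hno. apply Hnf. apply (fd_of_head_injective N P Hlin).
    intros c Pc Hc n. apply NNPP. intros Hn. apply Hno. eauto. }
  destruct Hex as [c [Pc [Hv [n0 Hn0]]]].
  destruct (Hl2 c Pc) as [s Hs].
  assert (Hspos : 0 < s).
  { pose proof (partial_le _ _ (S n0) Hs (fun n => Cnorm2_pos (c n))) as Hp. simpl in Hp.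
    pose proof (rsum_nonneg n0 (fun n => Cnorm2 (c n)) (fun n => Cnorm2_pos (c n))).
    pose proof (Cnorm2_nz _ Hn0). pose proof (Cnorm2_pos (c n0)).
    destruct (Rle_lt_or_eq_dec _ _ H1); lra. }
  set (r := mkC (/ sqrt s) 0).
  exists (fun n => Cadd (Cmul r (c n)) (Cmul Defs.C0 (c n))). split; [apply Hlin; auto|]. split.
  - replace 1 with (/ s * s + 0 * s) by (field; lra).
    eapply inf_sum_ext; [|apply (inf_sum_lin _ _ _ _ (/ s) 0 Hs Hs)].
    intros n. simpl. assert (E : / sqrt s * / sqrt s = / s).
    { rewrite <- Rinv_mult, sqrt_sqrt; lra. }
    destruct (c n) as [x y]. unfold Cnorm2; simpl. rewrite <- E. ring.
  - intros n Hn. simpl. rewrite (Hv n Hn). Cring.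
Qed.

(** * A compact operator cannot satisfy Re <T c, c> = ||c||^2 on an infinite-dimensional set *)

Definition form_identity (T : (nat -> Cx) -> (nat -> Cx)) (P : (nat -> Cx) -> Prop) : Prop :=
  forall c s, P c -> l2_sqsum c s -> infinite_sum (fun n => Re (Cmul (T c n) (Cconj (c n)))) s.

Lemma strict_mono_ge (phi : nat -> nat) :
  (forall k, (phi k < phi (S k))%nat) -> forall k, (k <= phi k)%nat.
Proof. intros Hp k. induction k; [lia|]. specialize (Hp k). lia. Qed.

(* Given unit vectors c_k vanishing on the first k coordinates, compactness
   gives T c_(phi k) -> d.  For j = phi k far out, ||T c_j - d||^2 < 1/8 and
   the tail of d beyond j has mass < 1/8; since c_j vanishes before j,
   Re_mul_conj_le yields Re <T c_j, c_j> <= 2/8 + 2/8 + 1/4 < 1. *)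
Lemma compact_not_form_identity (T : (nat -> Cx) -> (nat -> Cx)) (P : (nat -> Cx) -> Prop) :
  compact_l2_op T -> form_identity T P ->
  (forall k, exists c, P c /\ l2_sqsum c 1 /\ (forall n, (n < k)%nat -> c n = Defs.C0)) ->
  False.
Proof.
  intros HT Hid Hex.
  destruct (choice _ Hex) as [cs Hcs].
  destruct (HT cs) as [phi [d [Hphi [[sd Hd] Hconv]]]].
  { intros k. exists 1. split; [apply Hcs|lra]. }
  destruct (Hconv (1/8)) as [N1 HN1]; [lra|].
  destruct (tail_small _ _ Hd (1/8)) as [J HJ]; [lra|].
  set (k := max N1 J). set (j := phi k).
  assert (Hkj : (k <= j)%nat) by (apply strict_mono_ge; auto).
  destruct (HN1 k ltac:(unfold k; lia)) as [s1 [Hs1 Hs1b]].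
  specialize (HJ j ltac:(unfold k in *; lia)).
  set (c := cs j) in *. destruct (Hcs j) as [Pc [Hc1 Hcv]]. fold c in Pc, Hc1, Hcv.
  set (e := fun n => if Nat.ltb n j then 0 else Cnorm2 (d n)).
  assert (Hpt : forall n, Re (Cmul (T c n) (Cconj (c n)))
      <= 2 * Cnorm2 (Csub (T c n) (d n)) + 2 * e n + / 4 * Cnorm2 (c n)).
  { intros n. unfold e. destruct (Nat.ltb_spec n j) as [h|h].
    - rewrite (Hcv n h). pose proof (Cnorm2_pos (Csub (T c n) (d n))).
      destruct (T c n); unfold Cnorm2 in *; simpl in *. lra.
    - apply Re_mul_conj_le. }
  assert (Hrhs : infinite_sum
      (fun n => 2 * Cnorm2 (Csub (T c n) (d n)) + 2 * e n + / 4 * Cnorm2 (c n))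
      (1 * (2 * s1 + 2 * (sd - rsum j (fun n => Cnorm2 (d n)))) + / 4 * 1)).
  { pose proof (inf_sum_lin _ _ _ _ 2 2 Hs1 (inf_sum_tail _ _ j Hd)) as A1.
    refine (inf_sum_ext _ _ _ _ (inf_sum_lin _ _ _ _ 1 (/4) A1 Hc1)).
    intros n; unfold e, c, j; simpl; ring. }
  pose proof (inf_sum_le _ _ _ _ (Hid c 1 Pc Hc1) Hrhs Hpt).
  apply Rabs_def2 in HJ. lra.
Qed.

Lemma frame_near_Riesz {H : CHilbert} (h : nat -> H) (T : (nat -> Cx) -> (nat -> Cx)) :
  frame h -> compact_l2_op T -> form_identity T (ker_synthesis h) -> near_Riesz h.
Proof.
  intros Hh HT Hid. split; auto. apply NNPP. intros Hnf.
  apply (compact_not_form_identity T (ker_synthesis h) HT Hid).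
  apply unit_tail_vectors; auto.
  - intros a b c p. apply ker_synthesis_lin; auto.
  - intros c [Hc _]; exact Hc.
Qed.

(** * The quadratic form of I - V U^* on the two kernels *)

Section CrossGramDefect.
Context {H : CHilbert} (f g : nat -> H).

Definition cross_defect (c : nat -> Cx) (m : nat) : Cx :=
  Csub (c m) (analysis g (synthesis f c) m).

(* On Ker U^*, T c = c. *)
Lemma form_identity_ker_f : form_identity cross_defect (ker_synthesis f).
Proof.
  intros c s [_ E] Hs. unfold cross_defect, analysis. rewrite E.
  refine (inf_sum_ext _ _ _ _ Hs). intros n. rewrite inner_0l.
  destruct (c n); unfold Cnorm2; simpl; ring.
Qed.

(* On Ker V^*, <V U^* c, c> = <U^* c, V^* c> = 0. *)
Lemma form_identity_ker_g : frame g -> form_identity cross_defect (ker_synthesis g).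
Proof.
  intros Hg c s Kc Hs. unfold cross_defect, analysis.
  pose proof (pairing_ker_synthesis g c (synthesis f c) Hg Kc) as Hu.
  replace s with (1 * s + -1 * 0) by ring.
  refine (inf_sum_ext _ _ _ _ (inf_sum_lin _ _ _ _ 1 (-1) Hs Hu)). intros n.
  destruct (c n), (inner (synthesis f c) (g n)); unfold Cnorm2; simpl; ring.
Qed.

End CrossGramDefect.

Theorem corollary3p2 (H : CHilbert) (f g : nat -> H) :
  separable H -> infinite_dimensional H ->
  frame f -> frame g ->
  (* I - V U^* is compact on l^2 *)
  compact_l2_op (fun c m => Csub (c m) (analysis g (synthesis f c) m)) ->
  near_Riesz f /\ near_Riesz g.
Proof.
  intros _ _ Hf Hg HT. split.
  - exact (frame_near_Riesz f _ Hf HT (form_identity_ker_f f g)).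
  - exact (frame_near_Riesz g _ Hg HT (form_identity_ker_g f g Hg)).
Qed.
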